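(* Let $(A=\bigoplus_{k\ge1}A_k,\bullet_i,\Delta)$ be a preshuffle bialgebra, let $q\ge0$, and let $x_1,\dots,x_q,y,z\in A$ be homogeneous primitive elements ($\Delta$ vanishes on each). Then $L^p_q(x_1,\dots,x_q;y;z)$ is primitive for every $1\le p\le|y|$.
   Context: A preshuffle algebra is a graded vector space $A=\bigoplus_{n\ge0}A_n$ with linear maps $\bullet_i:A_n\otimes A_m\to A_{n+m}$ ($0\le i\le m$) such that $(x\bullet_iy)\bullet_jz=x\bullet_{i+j}(y\bullet_jz)$ for $0\le i\le|y|$, $0\le j\le|z|$ ($|\cdot|$ denotes degree). A preshuffle bialgebra is a preshuffle algebra with $A_0=0$ and a coassociative coproduct $\Delta$ with $\Delta(A_n)\subseteq\bigoplus_{i=1}^{n-1}A_i\otimes A_{n-i}$ (Sweedler notation $\Delta(z)=\sum z_{(1)}\otimes z_{(2)}$) such that for homogeneous $x,y$: (1) $\Delta(x\bullet_0y)=\sum x_{(1)}\otimes(x_{(2)}\bullet_0y)+x\otimes y+\sum(x\bullet_0y_{(1)})\otimes y_{(2)}$; (2) for $1\le i\le|y|-1$: $\Delta(x\bullet_iy)=\sum_{|y_{(1)}|\le i}y_{(1)}\otimes(x\bullet_{i-|y_{(1)}|}y_{(2)})+\sum_{|y_{(1)}|=i}(x_{(1)}\bullet_iy_{(1)})\otimes(x_{(2)}\bullet_0y_{(2)})+\sum_{|y_{(1)}|\ge i}(x\bullet_iy_{(1)})\otimes y_{(2)}$; (3) $\Delta(x\bullet_{|y|}y)=\sum y_{(1)}\otimes(x\bullet_{|y_{(2)}|}y_{(2)})+y\otimes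 x+\sum(x_{(1)}\bullet_{|y|}y)\otimes x_{(2)}$. The operations $L^p_q$: for $q=0$, $L^p_0(y;z)=z\bullet_py$ if $0<p<|y|$, and $L^{|y|}_0(y;z)=z\bullet_{|y|}y-y\bullet_0z$. For $q\ge1$, with $N=\sum_{k=1}^q|x_k|$ and $N'=\sum_{k=2}^q|x_k|$: $L^p_q(x_1,\dots,x_q;y;z)=z\bullet_{p+N}(x_1\bullet_0\cdots\bullet_0x_q\bullet_0y)-x_1\bullet_0\big(z\bullet_{p+N'}(x_2\bullet_0\cdots\bullet_0x_q\bullet_0y)\big)$ (the product $\bullet_0$ is associative). *)

From HB Require Import structures.
From mathcomp Require Import all_boot all_order all_algebra.
Set Implicit Arguments. Unset Strict Implicit. Unset Printing Implicit Defensive.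
Import GRing.Theory.
Local Open Scope ring_scope.

(* Conventions:
   - A is modelled by an ambient K-vector space V with graded pieces
     Agr n : V -> Prop (the subspaces A_n), V being their direct sum.
   - mul i x y  stands for  x \bullet_i y.
   - Elements of V (x) V are represented by finite lists of pairs (formal sums
     of elementary tensors); two lists denote the same tensor iff every
     bilinear map out of V x V (into any K-vector space) takes the same value
     on them (universal property of the tensor product).  Likewise for V(x)V(x)V.
   - The coproduct is given in Sweedler form by  Delta : V -> seq (nat*V*V),
     each triple (j, a, b) standing for the elementary tensor a (x) b with
     a in A_j (the tag j records |a|, i.e. |z_(1)|). *)

Section Defs.
Variables (K : fieldType) (V : lmodType K).

Definition bilinear_map (W : lmodType K) (beta : V -> V -> W) : Prop :=
  (forall (c : K) (u v w : V), beta (c *: u + v) w = c *: beta u w + beta v w) /\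
  (forall (c : K) (u v w : V), beta w (c *: u + v) = c *: beta w u + beta w v).

Definition trilinear_map (W : lmodType K) (gamma : V -> V -> V -> W) : Prop :=
  (forall (c : K) (u v w1 w2 : V),
      gamma (c *: u + v) w1 w2 = c *: gamma u w1 w2 + gamma v w1 w2) /\
  (forall (c : K) (u v w1 w2 : V),
      gamma w1 (c *: u + v) w2 = c *: gamma w1 u w2 + gamma w1 v w2) /\
  (forall (c : K) (u v w1 w2 : V),
      gamma w1 w2 (c *: u + v) = c *: gamma w1 w2 u + gamma w1 w2 v).

Definition teq (s1 s2 : seq (V * V)) : Prop :=
  forall (W : lmodType K) (beta : V -> V -> W), bilinear_map beta ->
    \sum_(t <- s1) beta t.1 t.2 = \sum_(t <- s2) beta t.1 t.2.

Definition teq3 (s1 s2 : seq (V * V * V)) : Prop :=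
  forall (W : lmodType K) (gamma : V -> V -> V -> W), trilinear_map gamma ->
    \sum_(t <- s1) gamma t.1.1 t.1.2 t.2 = \sum_(t <- s2) gamma t.1.1 t.1.2 t.2.

Definition untag (s : seq (nat * V * V)) : seq (V * V) :=
  [seq (t.1.2, t.2) | t <- s].

Record preshuffle_bialgebra (Agr : nat -> V -> Prop) (mul : nat -> V -> V -> V)
    (Delta : V -> seq (nat * V * V)) : Prop := {
  gr_sub0 : forall n, Agr n 0;
  gr_subC : forall n (c : K) u v, Agr n u -> Agr n v -> Agr n (c *: u + v);
  gr_A0 : forall v, Agr 0 v -> v = 0;
  gr_span : forall v, exists (N : nat) (f : nat -> V),
      (forall n, Agr n (f n)) /\ v = \sum_(n < N) f n;
  gr_indep : forall (N : nat) (f : nat -> V), (forall n, Agr n (f n)) ->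
      \sum_(n < N) f n = 0 -> forall n, (n < N)%N -> f n = 0;
  mul_linl : forall i (c : K) u v w, mul i (c *: u + v) w = c *: mul i u w + mul i v w;
  mul_linr : forall i (c : K) u v w, mul i w (c *: u + v) = c *: mul i w u + mul i w v;
  mul_graded : forall i n m x y, Agr n x -> Agr m y -> (i <= m)%N ->
      Agr (n + m)%N (mul i x y);
  mul_assoc : forall i j n m k x y z, Agr n x -> Agr m y -> Agr k z ->
      (i <= m)%N -> (j <= k)%N ->
      mul j (mul i x y) z = mul (i + j)%N x (mul j y z);
  Delta_lin : forall (c : K) u v,
      teq (untag (Delta (c *: u + v)))
          ([seq (c *: t.1, t.2) | t <- untag (Delta u)] ++ untag (Delta v));
  Delta_graded : forall n x, Agr n x -> forall t, t \in Delta x ->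
      [/\ (0 < t.1.1)%N, (t.1.1 < n)%N, Agr t.1.1 t.1.2 & Agr (n - t.1.1)%N t.2];
  Delta_coassoc : forall x,
      teq3 (flatten [seq [seq (u.1.2, u.2, t.2) | u <- Delta t.1.2] | t <- Delta x])
           (flatten [seq [seq (t.1.2, u.1.2, u.2) | u <- Delta t.2] | t <- Delta x]);
  Delta_mul0 : forall n m x y, Agr n x -> Agr m y ->
      teq (untag (Delta (mul 0 x y)))
          ([seq (t.1.2, mul 0 t.2 y) | t <- Delta x] ++ [:: (x, y)] ++
           [seq (mul 0 x t.1.2, t.2) | t <- Delta y]);
  Delta_muli : forall i n m x y, Agr n x -> Agr m y -> (1 <= i)%N -> (i <= m - 1)%N ->
      teq (untag (Delta (mul i x y)))
          ([seq (t.1.2, mul (i - t.1.1)%N x t.2) | t <- Delta y & (t.1.1 <= i)%N] ++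
           flatten [seq [seq (mul i s.1.2 t.1.2, mul 0 s.2 t.2) | t <- Delta y
                          & (t.1.1 == i)%N] | s <- Delta x] ++
           [seq (mul i x t.1.2, t.2) | t <- Delta y & (i <= t.1.1)%N]);
  Delta_mulm : forall n m x y, Agr n x -> Agr m y ->
      teq (untag (Delta (mul m x y)))
          ([seq (t.1.2, mul (m - t.1.1)%N x t.2) | t <- Delta y] ++ [:: (y, x)] ++
           [seq (mul m t.1.2 y, t.2) | t <- Delta x])
}.

Definition primitive (Delta : V -> seq (nat * V * V)) (z : V) : Prop :=
  teq (untag (Delta z)) [::].

(* x_1 \bullet_0 ( ... \bullet_0 (x_q \bullet_0 y)) ; xs lists (|x_k|, x_k) *)
Definition chain0 (mul : nat -> V -> V -> V) (xs : seq (nat * V)) (y : V) : V :=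
  foldr (fun t acc => mul 0%N t.2 acc) y xs.

Definition degsum (xs : seq (nat * V)) : nat := (\sum_(t <- xs) t.1)%N.

(* L^p_q(x_1,...,x_q; y; z) with xs = [:: (|x_1|,x_1); ...; (|x_q|,x_q)],
   m = |y| *)
Definition Lop (mul : nat -> V -> V -> V) (p : nat) (xs : seq (nat * V))
    (y : V) (m : nat) (z : V) : V :=
  match xs with
  | [::] => if (p == m)%N then mul m z y - mul 0%N y z else mul p z y
  | t :: xs' => mul (p + degsum xs)%N z (chain0 mul xs y)
                - mul 0%N t.2 (mul (p + degsum xs')%N z (chain0 mul xs' y))
  end.

End Defs.

(* The compatibility
   relations involve the degree |y_(1)|, so coproducts are handled as lists of
   tensors tagged by the degree of their left factor; projecting onto the
   graded pieces shows that, for homogeneous entries, equality of untagged sums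
   already implies equality against every tag-dependent family of bilinear maps.

   With x_1, ..., x_q, y primitive, relation (1) gives the coproduct of
   w = x_1 •0 ... •0 x_q •0 y as the sum of the terms
   (x_1 •0 ... •0 x_k) ⊗ (x_(k+1) •0 ... •0 y), k >= 1, whose left degrees are
   at most N = |x_1| + ... + |x_q|.  For z primitive and N < i <= |w|,
   relations (2) and (3) then reduce to
   Δ(z •_i w) = Σ w_(1) ⊗ z •_(i-|w_(1)|) w_(2)  (+ w ⊗ z when i = |w|).
   Applied to both terms of L^p_q (and with (1) for x_1 •0 _), this shows that
   they have the same coproduct, so their difference is primitive. *)

From Pilot Require Import Defs.
From HB Require Import structures.
From mathcomp Require Import all_boot all_order all_algebra.
From mathcomp Require Import zify.
From Stdlib Require Import IndefiniteDescription.
Set Implicit Arguments. Unset Strict Implicit. Unset Printing Implicit Defensive.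
Import GRing.Theory.
Local Open Scope ring_scope.

Section TaggedTensors.
Variables (K : fieldType) (V : lmodType K).

Lemma bilinear_map0l (W : lmodType K) (beta : V -> V -> W) :
  bilinear_map beta -> forall b, beta 0 b = 0.
Proof.
move=> [linl _] b; have := linl 1 0 0 b; rewrite !scale1r addr0 => e.
by apply: (addrI (beta 0 b)); rewrite addr0 -e.
Qed.

Lemma bilinear_mapZl (W : lmodType K) (beta : V -> V -> W) :
  bilinear_map beta -> forall c a b, beta (c *: a) b = c *: beta a b.
Proof.
move=> hb c a b; have := (proj1 hb) c a 0 b.
by rewrite addr0 (bilinear_map0l hb) addr0.
Qed.

Lemma bilinear_map_compl (W : lmodType K) (beta : V -> V -> W) (f : V -> V) :
  bilinear_map beta -> linear f -> bilinear_map (fun a b => beta (f a) b).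
Proof. by move=> [linl linr] lf; split=> c u v w /=; rewrite ?lf ?linl ?linr. Qed.

Lemma bilinear_map_compr (W : lmodType K) (beta : V -> V -> W) (g : V -> V) :
  bilinear_map beta -> linear g -> bilinear_map (fun a b => beta a (g b)).
Proof. by move=> [linl linr] lg; split=> c u v w /=; rewrite ?lg ?linl ?linr. Qed.

Definition tagged_eq (s1 s2 : seq (nat * V * V)) : Prop :=
  forall (W : lmodType K) (F : nat -> V -> V -> W), (forall j, bilinear_map (F j)) ->
    \sum_(u <- s1) F u.1.1 u.1.2 u.2 = \sum_(u <- s2) F u.1.1 u.1.2 u.2.

Lemma tagged_eq_trans s1 s2 s3 : tagged_eq s1 s2 -> tagged_eq s2 s3 -> tagged_eq s1 s3.
Proof. by move=> e12 e23 W F hF; rewrite (e12 W F hF) (e23 W F hF). Qed.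

Lemma tagged_eq_cons u s1 s2 : tagged_eq s1 s2 -> tagged_eq (u :: s1) (u :: s2).
Proof. by move=> e W F hF; rewrite !big_cons (e W F hF). Qed.

Lemma tagged_eq_map (g : nat -> nat) (f h : nat -> V -> V) s1 s2 :
  (forall j, linear (f j)) -> (forall j, linear (h j)) -> tagged_eq s1 s2 ->
  tagged_eq [seq (g u.1.1, f u.1.1 u.1.2, h u.1.1 u.2) | u <- s1]
            [seq (g u.1.1, f u.1.1 u.1.2, h u.1.1 u.2) | u <- s2].
Proof.
move=> lf lh e W F hF; rewrite !big_map /=.
apply: (e W (fun j a b => F (g j) (f j a) (h j b))) => j.
exact: bilinear_map_compl (bilinear_map_compr (hF _) (lh j)) (lf j).
Qed.

Lemma tagged_eq_sum_filter s1 s2 (P : pred nat) (W : lmodType K)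
    (F : nat -> V -> V -> W) :
  tagged_eq s1 s2 -> (forall j, bilinear_map (F j)) ->
  \sum_(u <- s1 | P u.1.1) F u.1.1 u.1.2 u.2 =
  \sum_(u <- s2 | P u.1.1) F u.1.1 u.1.2 u.2.
Proof.
move=> e hF; rewrite big_mkcond [RHS]big_mkcond.
apply: (e W (fun j a b => if P j then F j a b else 0)) => j.
by case: (P j); [exact: hF | split=> *; rewrite scaler0 addr0].
Qed.

Lemma tagged_eq_sum s1 s2 (W : lmodType K) (beta : V -> V -> W) :
  tagged_eq s1 s2 -> bilinear_map beta ->
  \sum_(u <- s1) beta u.1.2 u.2 = \sum_(u <- s2) beta u.1.2 u.2.
Proof. by move=> e hb; apply: (e W (fun _ => beta)). Qed.

End TaggedTensors.

Section GradedProjections.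
Variables (K : fieldType) (V : lmodType K) (Agr : nat -> V -> Prop).
Hypothesis Agr0 : forall n, Agr n 0.
Hypothesis AgrD : forall n (c : K) u v, Agr n u -> Agr n v -> Agr n (c *: u + v).
Hypothesis Agr_span : forall v, exists (N : nat) (f : nat -> V),
  (forall n, Agr n (f n)) /\ v = \sum_(n < N) f n.
Hypothesis Agr_indep : forall (N : nat) (f : nat -> V), (forall n, Agr n (f n)) ->
  \sum_(n < N) f n = 0 -> forall n, (n < N)%N -> f n = 0.

Definition decomposition (v : V) (s : seq V) : Prop :=
  (forall n, Agr n s`_n) /\ v = \sum_(n < size s) s`_n.

Lemma sum_nth_widen (s : seq V) N :
  (size s <= N)%N -> \sum_(n < size s) s`_n = \sum_(n < N) s`_n.
Proof.
move=> le_sN; rewrite (big_ord_widen N (fun n => s`_n) le_sN) big_mkcond /=.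
by apply: eq_bigr => i _; case: ltnP => // /(nth_default 0) ->.
Qed.

Lemma decomposition_exists v : exists s, decomposition v s.
Proof.
have [N [f [hf ->]]] := Agr_span v; exists (mkseq f N).
split; last by rewrite size_mkseq; apply: eq_bigr => i _; rewrite nth_mkseq.
move=> n; case: (ltnP n N) => [/(nth_mkseq 0 f) -> // | leNn].
by rewrite nth_default ?size_mkseq.
Qed.

Lemma decomposition_unique v s1 s2 :
  decomposition v s1 -> decomposition v s2 -> forall n, s1`_n = s2`_n.
Proof.
move=> [h1 e1] [h2 e2] n; pose N := (size s1 + size s2)%N.
have hdiff k : Agr k (s1`_k - s2`_k) by rewrite addrC -scaleN1r; apply: AgrD.
have sum0 : \sum_(k < N) (s1`_k - s2`_k) = 0.
  by rewrite sumrB -!sum_nth_widen ?leq_addr ?leq_addl // -e1 -e2 subrr.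
case: (ltnP n N) => [ltnN | leNn].
  by apply/eqP; rewrite -subr_eq0 (Agr_indep hdiff sum0).
by rewrite !nth_default // (leq_trans _ leNn) ?leq_addr ?leq_addl.
Qed.

Definition gproj (n : nat) (v : V) : V :=
  (proj1_sig (constructive_indefinite_description _ (decomposition_exists v)))`_n.

Lemma gprojE v s n : decomposition v s -> gproj n v = s`_n.
Proof.
move=> hs; rewrite /gproj; case: constructive_indefinite_description => s' hs' /=.
exact: decomposition_unique hs' hs n.
Qed.

Lemma gproj_homogeneous k a n : Agr k a -> gproj n a = if n == k then a else 0.
Proof.
move=> ha; pose s := mkseq (fun j => if j == k then a else 0) k.+1.
have es j : s`_j = if j == k then a else 0.
  case: (ltnP j k.+1) => [/(nth_mkseq 0) -> // | lekj].
  by rewrite nth_default ?size_mkseq //; case: eqP => // ejk; lia.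
rewrite (@gprojE a s) ?es //; split=> [j|]; first by rewrite es; case: eqP => [->|].
rewrite size_mkseq big_ord_recr /= es eqxx big1 ?add0r // => j _.
by rewrite es (ltn_eqF (ltn_ord j)).
Qed.

Lemma gproj_linear n : linear (gproj n).
Proof.
move=> c u v; have [su hu] := decomposition_exists u.
have [sv hv] := decomposition_exists v.
pose N := (size su + size sv)%N; pose s := mkseq (fun j => c *: su`_j + sv`_j) N.
have es j : s`_j = c *: su`_j + sv`_j.
  case: (ltnP j N) => [/(nth_mkseq 0) -> // | leNj].
  by rewrite !nth_default ?size_mkseq ?scaler0 ?addr0 //;
    rewrite (leq_trans _ leNj) ?leq_addr ?leq_addl.
rewrite (gprojE n hu) (gprojE n hv) (@gprojE _ s) ?es //; split=> [j|].
  by rewrite es; apply: AgrD; [case: hu | case: hv].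
rewrite size_mkseq (eq_bigr _ (fun (j : 'I_N) _ => es j)) big_split -scaler_sumr /=.
by rewrite -!sum_nth_widen ?leq_addr ?leq_addl // -(proj2 hu) -(proj2 hv).
Qed.

(* The bilinear map [(a, b) |-> \sum_j F j (a_j) b] reads off the degree of a
   homogeneous [a]: untagged identities thus become tagged ones. *)
Definition tag_eval (W : lmodType K) (F : nat -> V -> V -> W) (N : nat) (a b : V) : W :=
  \sum_(j < N) F j (gproj j a) b.

Lemma tag_eval_bilinear (W : lmodType K) (F : nat -> V -> V -> W) N :
  (forall j, bilinear_map (F j)) -> bilinear_map (tag_eval F N).
Proof.
move=> hF; split=> c u v w; rewrite /tag_eval scaler_sumr -big_split /=;
  apply: eq_bigr => j _; first by rewrite gproj_linear (proj1 (hF j)).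
by rewrite (proj2 (hF j)).
Qed.

Lemma tag_eval_homogeneous (W : lmodType K) (F : nat -> V -> V -> W) N k a b :
  (forall j, bilinear_map (F j)) -> Agr k a -> (k < N)%N -> tag_eval F N a b = F k a b.
Proof.
move=> hF ha ltkN; rewrite /tag_eval (bigD1 (Ordinal ltkN)) //=.
rewrite (gproj_homogeneous _ ha) eqxx.
rewrite big1 ?addr0 // => j neq_jk; rewrite (gproj_homogeneous _ ha).
case: eqP => [ejk | _]; last exact: bilinear_map0l.
by move: neq_jk; rewrite -val_eqE /= ejk eqxx.
Qed.

Definition well_tagged (s : seq (nat * V * V)) : Prop :=
  forall u, u \in s -> Agr u.1.1 u.1.2.

Lemma teq_tagged s1 s2 : well_tagged s1 -> well_tagged s2 ->
  teq (Defs.untag s1) (Defs.untag s2) -> tagged_eq s1 s2.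
Proof.
move=> h1 h2 e W F hF; pose N := (\max_(u <- s1 ++ s2) u.1.1)%N.+1.
have tag_evalE s : {subset s <= s1 ++ s2} -> well_tagged s ->
    \sum_(u <- s) F u.1.1 u.1.2 u.2 = \sum_(u <- Defs.untag s) tag_eval F N u.1 u.2.
  move=> sub hs; rewrite big_map big_seq [RHS]big_seq; apply: eq_bigr => u us.
  rewrite (tag_eval_homogeneous _ hF (hs u us)) // ltnS.
  exact: (@leq_bigmax_seq _ (s1 ++ s2) xpredT (fun v => v.1.1) u (sub u us)).
rewrite !tag_evalE // => [|u us|u us]; rewrite ?mem_cat ?us ?orbT //.
exact: e (tag_eval_bilinear N hF).
Qed.

End GradedProjections.

Section PreshuffleBialgebra.
Variables (K : fieldType) (V : lmodType K).
Variables (Agr : nat -> V -> Prop) (mul : nat -> V -> V -> V)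
  (Delta : V -> seq (nat * V * V)).
Hypothesis H : preshuffle_bialgebra Agr mul Delta.

Local Notation well_tagged := (well_tagged Agr).
Local Notation teq_tagged := (teq_tagged (gr_sub0 H) (gr_subC H) (gr_span H) (gr_indep H)).

Lemma mul_linear i x : linear (mul i x).
Proof. by move=> c u v; rewrite (mul_linr H). Qed.

Lemma mul_linearl i y : linear (mul i ^~ y).
Proof. by move=> c u v; rewrite (mul_linl H). Qed.

Lemma Delta_well_tagged n v : Agr n v -> well_tagged (Delta v).
Proof. by move=> hv u /(Delta_graded H hv) []. Qed.

Lemma sum_Delta_teq v L (W : lmodType K) (beta : V -> V -> W) :
  teq (Defs.untag (Delta v)) L -> bilinear_map beta ->
  \sum_(t <- Delta v) beta t.1.2 t.2 = \sum_(t <- L) beta t.1 t.2.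
Proof. by move=> e hb; rewrite -(e W beta hb) big_map. Qed.

Lemma primitive_sum x (W : lmodType K) (beta : V -> V -> W) :
  primitive Delta x -> bilinear_map beta -> \sum_(t <- Delta x) beta t.1.2 t.2 = 0.
Proof. by move=> px hb; rewrite (sum_Delta_teq px hb) big_nil. Qed.

Lemma primitive_tagged n v : Agr n v -> primitive Delta v -> tagged_eq (Delta v) [::].
Proof.
by move=> hv; apply: teq_tagged (Delta_well_tagged hv) (_ : well_tagged [::]).
Qed.

Lemma tagged_nil_primitive v : tagged_eq (Delta v) [::] -> primitive Delta v.
Proof. by move=> e W beta hb; rewrite big_map big_nil (tagged_eq_sum e hb) big_nil. Qed.

Lemma primitive_subr a b s :
  tagged_eq (Delta a) s -> tagged_eq (Delta b) s -> primitive Delta (a - b).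
Proof.
move=> ea eb W beta hb; have := Delta_lin H (-1) b a; rewrite scaleN1r addrC => e.
rewrite (e W beta hb) big_cat !big_map big_nil /=.
under eq_bigr do rewrite (bilinear_mapZl hb) scaleN1r.
by rewrite sumrN (tagged_eq_sum ea hb) (tagged_eq_sum eb hb) addNr.
Qed.

Lemma Delta_mul0_primitivel n M x v s :
  Agr n x -> primitive Delta x -> Agr M v -> tagged_eq (Delta v) s ->
  tagged_eq (Delta (mul 0 x v))
            ((n, x, v) :: [seq ((n + u.1.1)%N, mul 0 x u.1.2, u.2) | u <- s]).
Proof.
move=> hx px hv ev; apply: (tagged_eq_trans _ (tagged_eq_cons _
  (tagged_eq_map (addn n) (h := fun=> id) (fun=> mul_linear 0 x) _ ev))) => //.
apply: teq_tagged => [|u|W beta hb].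
- exact: Delta_well_tagged (mul_graded H hx hv (leq0n _)).
- rewrite in_cons => /predU1P [-> // | /mapP [u' u's ->]].
  exact: (mul_graded H hx (Delta_well_tagged hv u's) (leq0n _)).
rewrite (Delta_mul0 H hx hv hb) !big_cat !big_map /= !big_cons !big_nil addr0 big_map.
by rewrite (primitive_sum px (bilinear_map_compr hb (mul_linearl 0 v))) add0r.
Qed.

Section LeftPrimitiveProduct.
Variables (i l M : nat) (z w : V) (s : seq (nat * V * V)).
Hypotheses (hz : Agr l z) (hw : Agr M w) (ew : tagged_eq (Delta w) s).
Hypothesis tags_lt : forall u, u \in s -> (u.1.1 < i)%N.

Lemma sum_Delta_tag_lt (P : pred nat) (W : lmodType K) (F : nat -> V -> V -> W) :
  (forall j, (j < i)%N -> P j) -> (forall j, bilinear_map (F j)) ->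
  \sum_(t <- Delta w | P t.1.1) F t.1.1 t.1.2 t.2 = \sum_(u <- s) F u.1.1 u.1.2 u.2.
Proof.
move=> hP hF; rewrite (tagged_eq_sum_filter _ ew hF) big_seq_cond [RHS]big_seq.
by apply: eq_bigl => u; case us: (u \in s); rewrite //= hP ?tags_lt.
Qed.

Lemma sum_Delta_tag_ge (P : pred nat) (W : lmodType K) (F : nat -> V -> V -> W) :
  (forall j, P j -> (i <= j)%N) -> (forall j, bilinear_map (F j)) ->
  \sum_(t <- Delta w | P t.1.1) F t.1.1 t.1.2 t.2 = 0.
Proof.
move=> hP hF; rewrite (tagged_eq_sum_filter _ ew hF) big_seq_cond big1 // => u.
by case/andP=> /tags_lt lt_ui /hP; rewrite leqNgt lt_ui.
Qed.

Lemma sum_Delta_mul_lt (W : lmodType K) (beta : V -> V -> W) :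
  (1 <= i)%N -> (i < M)%N -> bilinear_map beta ->
  \sum_(t <- Delta (mul i z w)) beta t.1.2 t.2 =
  \sum_(u <- s) beta u.1.2 (mul (i - u.1.1) z u.2).
Proof.
move=> i_gt0 ltiM hb; have leiM1 : (i <= M - 1)%N by lia.
rewrite (sum_Delta_teq (Delta_muli H hz hw i_gt0 leiM1) hb) !big_cat !big_map /=.
rewrite big_allpairs_dep /= !big_filter.
rewrite (@sum_Delta_tag_lt (fun j => j <= i)%N _ (fun j a b => beta a (mul (i - j) z b)));
  last 2 first; [by move=> j /ltnW |
                 move=> j; exact: bilinear_map_compr hb (mul_linear _ _) |].
rewrite (@sum_Delta_tag_ge (leq i) _ (fun _ a b => beta (mul i z a) b));
  last 2 first; [by [] | move=> j; exact: bilinear_map_compl hb (mul_linear _ _) |].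
rewrite addr0 [X in _ + X]big1 ?addr0 // => u _; rewrite big_filter.
apply: (@sum_Delta_tag_ge (eqn^~ i) _ (fun _ a b => beta (mul i u.1.2 a) (mul 0 u.2 b)))
  => [j /eqP -> // | j].
exact: bilinear_map_compl (bilinear_map_compr hb (mul_linear 0 u.2)) (mul_linear i u.1.2).
Qed.

Lemma sum_Delta_mul_top (W : lmodType K) (beta : V -> V -> W) :
  primitive Delta z -> bilinear_map beta ->
  \sum_(t <- Delta (mul M z w)) beta t.1.2 t.2 =
  \sum_(u <- s) beta u.1.2 (mul (M - u.1.1) z u.2) + beta w z.
Proof.
move=> pz hb; rewrite (sum_Delta_teq (Delta_mulm H hz hw) hb) !big_cat !big_map /=.
rewrite big_cons big_nil addr0 (primitive_sum pz (bilinear_map_compl hb (mul_linearl M w))).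
rewrite addr0 (@ew W (fun j a b => beta a (mul (M - j) z b))) // => j.
exact: bilinear_map_compr hb (mul_linear _ _).
Qed.

Lemma Delta_mul_primitivel : primitive Delta z -> well_tagged s -> (1 <= i <= M)%N ->
  tagged_eq (Delta (mul i z w))
    ([seq (u.1.1, u.1.2, mul (i - u.1.1) z u.2) | u <- s] ++
     (if i == M then [:: (M, w, z)] else [::])).
Proof.
move=> pz hs /andP [i_gt0 leiM]; apply: teq_tagged => [|u|W beta hb].
- exact: Delta_well_tagged (mul_graded H hz hw leiM).
- rewrite mem_cat => /orP [/mapP [u' u's ->] | ]; first exact: (hs u' u's).
  by case: eqP => // _; rewrite inE => /eqP ->.
rewrite /Defs.untag map_cat big_cat !big_map /=.
move: leiM; rewrite leq_eqVlt => /orP [/eqP eiM | ltiM].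
  by rewrite eiM eqxx big_cons big_nil addr0 sum_Delta_mul_top.
by rewrite (ltn_eqF ltiM) big_nil addr0 sum_Delta_mul_lt.
Qed.

End LeftPrimitiveProduct.

(* Sweedler form of the coproduct of [x_1 •0 ... •0 x_q •0 y]:
   the terms (x_1 •0 ... •0 x_k) ⊗ (x_(k+1) •0 ... •0 x_q •0 y), k >= 1. *)
Fixpoint chain_coproduct (xs : seq (nat * V)) (y : V) : seq (nat * V * V) :=
  if xs is t :: xs' then
    (t.1, t.2, chain0 mul xs' y) ::
      [seq ((t.1 + u.1.1)%N, mul 0 t.2 u.1.2, u.2) | u <- chain_coproduct xs' y]
  else [::].

Lemma degsum_cons (t : nat * V) xs : degsum (t :: xs) = (t.1 + degsum xs)%N.
Proof. by rewrite /degsum big_cons. Qed.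

Lemma chain_coproduct_tags xs y u :
  u \in chain_coproduct xs y -> (u.1.1 <= degsum xs)%N.
Proof.
elim: xs u => [//|t xs IH] u; rewrite /= in_cons degsum_cons.
by case/predU1P=> [-> | /mapP [u' /IH le_u' ->]]; rewrite /= ?leq_addr ?leq_add2l.
Qed.

Lemma chain_coproduct_well_tagged xs y : (forall t, t \in xs -> Agr t.1 t.2) ->
  well_tagged (chain_coproduct xs y).
Proof.
elim: xs => [//|t xs IH] hxs u; have hxs' t' : t' \in xs -> Agr t'.1 t'.2.
  by move=> ht'; apply/hxs/mem_behead.
rewrite /= in_cons => /predU1P [-> | /mapP [u' u's ->]]; first exact/hxs/mem_head.
exact: (mul_graded H (hxs _ (mem_head _ _)) (IH hxs' u' u's) (leq0n _)).
Qed.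

Section Chains.
Variables (y : V) (m : nat).
Hypothesis hy : Agr m y.

Lemma chain0_graded xs : (forall t, t \in xs -> Agr t.1 t.2) ->
  Agr (degsum xs + m) (chain0 mul xs y).
Proof.
elim: xs => [|t xs IH] hxs; first by rewrite /degsum big_nil.
rewrite degsum_cons -addnA; apply: (mul_graded H) (leq0n _); first exact/hxs/mem_head.
by apply: IH => t' ht'; apply/hxs/mem_behead.
Qed.

Lemma Delta_chain0 xs :
  (forall t, t \in xs -> Agr t.1 t.2 /\ primitive Delta t.2) -> primitive Delta y ->
  tagged_eq (Delta (chain0 mul xs y)) (chain_coproduct xs y).
Proof.
move=> + py; elim: xs => [|t xs IH] hxs; first exact: primitive_tagged hy py.
have [ht pt] := hxs t (mem_head _ _).
have hxs' t' : t' \in xs -> Agr t'.1 t'.2 /\ primitive Delta t'.2.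
  by move=> ht'; apply/hxs/mem_behead.
apply: Delta_mul0_primitivel ht pt (chain0_graded _) (IH hxs').
by move=> t' /hxs' [].
Qed.

End Chains.

Lemma primitive_Lop_nil p y m z l :
  Agr m y -> primitive Delta y -> Agr l z -> primitive Delta z -> (1 <= p <= m)%N ->
  primitive Delta (Lop mul p [::] y m z).
Proof.
move=> hy py hz pz hp.
have ezy : tagged_eq (Delta (mul p z y)) (if p == m then [:: (m, y, z)] else [::]).
  by apply: (Delta_mul_primitivel hz hy (primitive_tagged hy py)).
rewrite /Lop; case: eqP ezy => [-> ezy | _]; last exact: tagged_nil_primitive.
exact: primitive_subr ezy (Delta_mul0_primitivel hy py hz (primitive_tagged hz pz)).
Qed.

Lemma primitive_Lop_cons p n x xs y m z l :
  (forall t, t \in (n, x) :: xs -> Agr t.1 t.2 /\ primitive Delta t.2) ->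
  Agr m y -> primitive Delta y -> Agr l z -> primitive Delta z -> (1 <= p <= m)%N ->
  primitive Delta (Lop mul p ((n, x) :: xs) y m z).
Proof.
move=> hxs hy py hz pz /andP [p_gt0 le_pm].
have [hx px] := hxs _ (mem_head _ _).
have hxs' t : t \in xs -> Agr t.1 t.2 /\ primitive Delta t.2.
  by move=> ht; apply/hxs/mem_behead.
have graded (ts : seq (nat * V)) :
    (forall t, t \in ts -> Agr t.1 t.2 /\ primitive Delta t.2) ->
    forall t, t \in ts -> Agr t.1 t.2 by move=> h t /h [].
have tags_lt (ts : seq (nat * V)) u :
  u \in chain_coproduct ts y -> (u.1.1 < p + degsum ts)%N.
  by move/chain_coproduct_tags; lia.
have bounds (ts : seq (nat * V)) : (1 <= p + degsum ts <= degsum ts + m)%N.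
  by apply/andP; split; lia.
have e1 := Delta_mul_primitivel hz (chain0_graded hy (graded _ hxs)) (Delta_chain0 hy hxs py)
  (@tags_lt _) pz (chain_coproduct_well_tagged (graded _ hxs)) (bounds _).
have e2 := Delta_mul_primitivel hz (chain0_graded hy (graded _ hxs')) (Delta_chain0 hy hxs' py)
  (@tags_lt _) pz (chain_coproduct_well_tagged (graded _ hxs')) (bounds _).
have e3 := Delta_mul0_primitivel hx px
  (mul_graded H hz (chain0_graded hy (graded _ hxs')) (proj2 (andP (bounds _)))) e2.
(* With c = x_2 •0 ... •0 y and u = z •_(p+N') c, both terms of L have the
   coproduct x_1 ⊗ u + Σ (x_1 •0 c_(1)) ⊗ (z •_(p+N'-|c_(1)|) c_(2))
   (+ w ⊗ z if p = |y|); what remains is index arithmetic. *)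
rewrite /Lop; apply: primitive_subr e1 _.
rewrite /= degsum_cons -map_comp addnCA addKn -!addnA eqn_add2l.
rewrite (@eq_map _ _ _
  (fun u => ((n + u.1.1)%N, mul 0 x u.1.2, mul (p + degsum xs - u.1.1) z u.2))).
  by move: e3; rewrite /= map_cat -map_comp; case: eqP.
by move=> u /=; rewrite subnDl.
Qed.

End PreshuffleBialgebra.

Local Close Scope ring_scope.

Theorem mainTheorem18 (K : fieldType) (V : lmodType K)
    (Agr : nat -> V -> Prop) (mul : nat -> V -> V -> V)
    (Delta : V -> seq (nat * V * V)) :
  preshuffle_bialgebra Agr mul Delta ->
  forall (xs : seq (nat * V)) (y z : V) (m l : nat),
    (forall t, t \in xs -> Agr t.1 t.2 /\ primitive Delta t.2) ->
    Agr m y -> primitive Delta y ->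
    Agr l z -> primitive Delta z ->
    forall p : nat, (1 <= p)%N -> (p <= m)%N ->
      primitive Delta (Lop mul p xs y m z).
Proof.
move=> H xs y z m l hxs hy py hz pz p p_gt0 le_pm.
have hp : (1 <= p <= m)%N by rewrite p_gt0.
case: xs hxs => [_ | [n x] xs hxs]; first exact: (primitive_Lop_nil H hy py hz pz hp).
exact: (primitive_Lop_cons H hxs hy py hz pz hp).
Qed.
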